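(* Let $\lambda$ be a regular uncountable cardinal, $\kappa<\lambda$, and let $\mathcal{C}$ be a coherent sequence of length $\lambda$ and width $<\kappa$. If $\mathcal{C}$ has a weak thread, then $\mathcal{C}$ has a thread.
   Context: For a set of ordinals $A$, $\mathrm{acc}(A)$ is the set of $\beta<\sup\{\alpha+1\mid\alpha\in A\}$ with $\beta=\sup(A\cap\beta)$. A coherent sequence of length $\lambda$ and width $<\eta$ is $\mathcal{C}=\langle\mathcal{C}_\alpha\mid\alpha<\lambda\rangle$ where each $\mathcal{C}_\alpha$ is a nonempty set of fewer than $\eta$ closed unbounded subsets of $\alpha$ (for successor $\alpha=\beta+1$, $\mathcal{C}_\alpha=\{\{\beta\}\}$), such that for all $\beta<\lambda$, $C\in\mathcal{C}_\beta$ and $\alpha\in\mathrm{acc}(C)$, $C\cap\alpha\in\mathcal{C}_\alpha$. A thread through $\mathcal{C}$ is a club $D\subseteq\lambda$ with $D\cap\alpha\in\mathcal{C}_\alpha$ for all $\alpha\in\mathrm{acc}(D)$. A weak thread through $\mathcal{C}$ is a club $E\subseteq\lambda$ such that for every $\alpha\in\mathrm{acc}(E)$ there is $C\in\mathcal{C}_\alpha$ with $E\cap\alpha\subseteq C$. *)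

(* lambda is modelled as a type L with a strict well-order lt
   (L = the set of ordinals below lambda, up to order isomorphism). *)
From Stdlib Require Import Classical.

Section Defs.
Variables (L : Type) (lt : L -> L -> Prop).

Definition le (a b : L) : Prop := lt a b \/ a = b.

Definition injective {A B : Type} (f : A -> B) : Prop :=
  forall x y, f x = f y -> x = y.

Definition card_lt (A B : Type) : Prop :=
  (exists f : A -> B, injective f) /\ ~ (exists g : B -> A, injective g).

Definition strict_wellorder : Prop :=
  (forall a, ~ lt a a) /\
  (forall a b c, lt a b -> lt b c -> lt a c) /\
  (forall a b, lt a b \/ a = b \/ lt b a) /\
  well_founded lt.

Definition regular_uncountable_cardinal : Prop :=
  strict_wellorder /\
  (* cardinal: no ordinal alpha < lambda has |alpha| = |lambda| *)
  (forall a : L, ~ exists f : L -> {b : L | lt b a}, injective f) /\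
  (* regular: no map from an ordinal alpha < lambda is cofinal in lambda *)
  (forall (a : L) (f : {b : L | lt b a} -> L), exists c, forall x, lt (f x) c) /\
  ~ (exists f : L -> nat, injective f).

(* acc(A): beta < sup{alpha+1 | alpha in A} and beta = sup(A cap beta) *)
Definition acc (A : L -> Prop) (beta : L) : Prop :=
  (exists a, A a /\ le beta a) /\
  (forall g, lt g beta -> exists a, A a /\ lt g a /\ lt a beta).

Definition restrict (A : L -> Prop) (alpha : L) : L -> Prop :=
  fun x => A x /\ lt x alpha.

Definition closed_within (bound : L -> Prop) (A : L -> Prop) : Prop :=
  forall g, bound g -> acc A g -> (exists a, A a /\ lt a g) -> A g.

Definition club_in (alpha : L) (A : L -> Prop) : Prop :=
  (forall x, A x -> lt x alpha) /\
  (forall b, lt b alpha -> exists g, A g /\ le b g) /\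
  closed_within (fun g => lt g alpha) A.

Definition club (A : L -> Prop) : Prop :=
  (forall b, exists g, A g /\ le b g) /\
  closed_within (fun _ => True) A.

Definition coherent_seq (C : L -> (L -> Prop) -> Prop) (kappa : L) : Prop :=
  (forall alpha, exists X, C alpha X) /\
  (forall alpha X, C alpha X -> club_in alpha X) /\
  (forall alpha beta, lt beta alpha -> (forall g, ~ (lt beta g /\ lt g alpha)) ->
     forall X, C alpha X <-> (forall x, X x <-> x = beta)) /\
  (forall alpha, card_lt {X : L -> Prop | C alpha X} {b : L | lt b kappa}) /\
  (forall beta X, C beta X -> forall alpha, acc X alpha -> C alpha (restrict X alpha)).

Definition thread (C : L -> (L -> Prop) -> Prop) (D : L -> Prop) : Prop :=
  club D /\ forall alpha, acc D alpha -> C alpha (restrict D alpha).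

Definition weak_thread (C : L -> (L -> Prop) -> Prop) (E : L -> Prop) : Prop :=
  club E /\ forall alpha, acc E alpha ->
    exists X, C alpha X /\ forall x, restrict E alpha x -> X x.

End Defs.

(* Let A = acc(E), an unbounded subset of lambda.  For a in A call X in C_a covering if
   E ∩ a ⊆ X; covering clubs exist because E is a weak thread, and they restrict to
   covering clubs at smaller points of A.  As fewer than kappa < lambda clubs live at each
   level and lambda is regular, some covering X at a has covering extensions at every
   higher point of A; call such an X persistent.  Persistent clubs restrict and extend to
   persistent clubs.  If some persistent X has a unique persistent extension at each
   higher point of A, these extensions cohere and their union is a thread.  Otherwise
   every persistent club splits, and above each a in A there is a single b in A at which
   all persistent clubs at a split.  Iterating this kappa times below a point delta of A
   and following a persistent club z at delta, each stage yields a club at delta that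
   agrees with z up to that stage and leaves it before the next one; these kappa clubs are
   pairwise distinct, contradicting |C_delta| < kappa. *)

From Pilot Require Import Defs.
From Stdlib Require Import Classical IndefiniteDescription
  FunctionalExtensionality PropExtensionality ProofIrrelevance.

Lemma pred_ext (A : Type) (X Y : A -> Prop) : (forall x, X x <-> Y x) -> X = Y.
Proof.
  intro H. apply functional_extensionality; intro x.
  apply propositional_extensionality, H.
Qed.

Section WellOrder.
Variables (L : Type) (lt : L -> L -> Prop).
Hypothesis lt_trans : forall a b c, lt a b -> lt b c -> lt a c.
Hypothesis lt_total : forall a b, lt a b \/ a = b \/ lt b a.
Hypothesis lt_wf : well_founded lt.

Local Notation le := (le L lt).
Local Notation acc := (acc L lt).
Local Notation restrict := (restrict L lt).
Local Notation thread := (thread L lt).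

Lemma le_lt_trans a b c : le a b -> lt b c -> lt a c.
Proof. intros [ab|<-] bc; eauto. Qed.

Lemma exists_le_both a b : exists m, le a m /\ le b m.
Proof.
  unfold Defs.le.
  destruct (lt_total a b) as [ab|[<-|ba]]; [exists b|exists a|exists a]; tauto.
Qed.

Lemma wf_minimal (Q : L -> Prop) x : Q x -> exists m, Q m /\ forall y, Q y -> ~ lt y m.
Proof.
  revert x.
  apply (well_founded_ind lt_wf (fun x => Q x -> exists m, Q m /\ forall y, Q y -> ~ lt y m)).
  intros x IH Qx.
  destruct (classic (exists y, Q y /\ lt y x)) as [[y [Qy yx]]|none_below].
  - exact (IH y yx Qy).
  - exists x; split; auto. intros y Qy yx; apply none_below; eauto.
Qed.

Definition limit_point (a : L) : Prop :=
  (exists g, lt g a) /\ forall g, lt g a -> exists h, lt g h /\ lt h a.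

Inductive finite_rank : L -> nat -> Prop :=
| finite_rank_min a : (forall g, ~ lt g a) -> finite_rank a 0
| finite_rank_succ a g k : lt g a -> (forall h, ~ (lt g h /\ lt h a)) ->
    finite_rank g k -> finite_rank a (S k).

Lemma finite_rank_functional k a b : finite_rank a k -> finite_rank b k -> a = b.
Proof.
  revert a b; induction k as [|k IH]; intros a b Ha Hb.
  - inversion Ha as [? a_min|]; inversion Hb as [? b_min|]; subst.
    destruct (lt_total a b) as [ab|[ab|ba]]; [exfalso; eapply b_min; eauto|exact ab|].
    exfalso; eapply a_min; eauto.
  - inversion Ha as [|? g1 ? ga a_next Hg1]; inversion Hb as [|? g2 ? gb b_next Hg2]; subst.
    assert (g1 = g2) by (apply IH; assumption). subst g2.
    destruct (lt_total a b) as [ab|[ab|ba]]; [exfalso; apply (b_next a); auto|exact ab|].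
    exfalso; apply (a_next b); auto.
Qed.

Lemma finite_rank_exists : (forall a, ~ limit_point a) -> forall a, exists k, finite_rank a k.
Proof.
  intro no_limit. apply (well_founded_ind lt_wf). intros a IH.
  destruct (classic (exists g, lt g a)) as [a_succ|a_min].
  - assert (exists g, lt g a /\ ~ exists h, lt g h /\ lt h a) as [g [ga g_next]].
    { apply NNPP; intro N. apply (no_limit a); split; auto.
      intros g ga. apply NNPP; intro N'. apply N. eauto. }
    destruct (IH g ga) as [k Hk]. exists (S k).
    apply finite_rank_succ with g; auto. intros h [gh ha]; apply g_next; eauto.
  - exists 0. apply finite_rank_min. intros g ga; apply a_min; eauto.
Qed.

Lemma exists_limit_point : ~ (exists f : L -> nat, injective f) -> exists a, limit_point a.
Proof.
  intro uncountable. apply NNPP; intro no_limit.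
  destruct (functional_choice _ (finite_rank_exists (fun a la => no_limit (ex_intro _ a la))))
    as [rank Hrank].
  apply uncountable. exists rank. intros a b e.
  apply (finite_rank_functional (rank a)); [|rewrite e]; apply Hrank.
Qed.

Lemma acc_mono_below (X Y : L -> Prop) (g b : L) :
  (forall x, X x -> lt x b -> Y x) -> lt g b -> (exists h, Y h /\ le g h) ->
  acc X g -> acc Y g.
Proof.
  intros XY gb Y_above [_ X_dense]. split; auto.
  intros h hg. destruct (X_dense h hg) as [x [Xx [hx xg]]]. exists x; split; eauto.
Qed.

Lemma restrict_restrict (X : L -> Prop) a b : lt a b -> restrict (restrict X b) a = restrict X a.
Proof.
  intro ab. apply pred_ext. intro x. unfold Defs.restrict. split; [tauto|].
  intros [Xx xa]. eauto.
Qed.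

Lemma separated_injective (P : L -> Prop) (W : L -> L -> Prop) (z : L -> Prop) (u t : L -> L) :
  (forall x y, P x -> P y -> lt x y -> lt (t x) (u y)) ->
  (forall x, P x -> restrict (W x) (u x) = restrict z (u x)) ->
  (forall x, P x -> restrict (W x) (t x) <> restrict z (t x)) ->
  forall x y, P x -> P y -> W x = W y -> x = y.
Proof.
  intros tu W_agrees W_differs.
  assert (below : forall x y, P x -> P y -> lt x y -> W x <> W y).
  { intros x y Px Py xy e. apply (W_differs x Px).
    rewrite e, <- (restrict_restrict (W y) _ _ (tu x y Px Py xy)), W_agrees by assumption.
    apply restrict_restrict, tu; assumption. }
  intros x y Px Py e. destruct (lt_total x y) as [xy|[xy|yx]]; auto.
  - exfalso; exact (below x y Px Py xy e).
  - exfalso; exact (below y x Py Px yx (eq_sym e)).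
Qed.

Section Regular.
Hypothesis lt_regular : forall (a : L) (f : {b : L | lt b a} -> L), exists c, forall x, lt (f x) c.
Hypothesis L_uncountable : ~ exists f : L -> nat, injective f.

Lemma exists_gt (b : L) : exists c, lt b c.
Proof.
  apply NNPP; intro no_gt.
  destruct (classic (exists y, lt y b)) as [[y yb]|b_min].
  - destruct (lt_regular b (fun _ => b)) as [c Hc].
    apply no_gt. exists c. exact (Hc (exist _ y yb)).
  - apply L_uncountable. exists (fun _ => 0). intros x y _.
    assert (only_b : forall z, z = b).
    { intro z. destruct (lt_total z b) as [h|[h|h]]; [exfalso; eauto|exact h|exfalso; eauto]. }
    now rewrite (only_b x), (only_b y).
Qed.

Lemma cofinal_recursion (P : L -> Prop) (h : L -> L) (b0 : L) :
  (forall b, exists g, P g /\ lt b g) ->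
  exists s : L -> L, forall x,
    P (s x) /\ lt b0 (s x) /\ forall y, lt y x -> lt (h (s y)) (s x).
Proof.
  intros P_unbounded.
  assert (step : forall x (r : forall y, lt y x -> L), exists g,
             P g /\ lt b0 g /\ forall y (p : lt y x), lt (h (r y p)) g).
  { intros x r.
    destruct (lt_regular x (fun y => h (r (proj1_sig y) (proj2_sig y)))) as [c Hc].
    destruct (exists_le_both c b0) as [m [cm b0m]].
    destruct (P_unbounded m) as [g [Pg mg]].
    exists g. split; [exact Pg|split].
    - eapply le_lt_trans; eauto.
    - intros y p. apply lt_trans with c; [exact (Hc (exist _ y p))|eapply le_lt_trans; eauto]. }
  pose (F := fun x r => proj1_sig (constructive_indefinite_description _ (step x r))).
  assert (HF : forall x r, P (F x r) /\ lt b0 (F x r) /\ forall y p, lt (h (r y p)) (F x r))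
    by (intros x r; exact (proj2_sig (constructive_indefinite_description _ (step x r)))).
  exists (Fix lt_wf (fun _ => L) F). intro x. rewrite Fix_eq.
  - apply HF.
  - intros x0 f g fg.
    replace g with f by (apply functional_extensionality_dep; intro y;
                         apply functional_extensionality_dep; auto).
    reflexivity.
Qed.

Lemma bounded_on_small (T : Type) (kappa : L) (R : T -> L -> Prop) :
  (exists f : T -> {b : L | lt b kappa}, injective f) ->
  (forall t, exists g, R t g) -> exists c, forall t, exists g, R t g /\ lt g c.
Proof.
  intros [f f_inj] R_total.
  assert (pick : forall b : {b : L | lt b kappa}, exists g, forall t, f t = b -> R t g).
  { intro b. destruct (classic (exists t, f t = b)) as [[t0 e0]|not_hit].
    - destruct (R_total t0) as [g Hg]. exists g. intros t e.
      rewrite (f_inj t t0) by congruence. exact Hg.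
    - exists kappa. intros t e. exfalso; eauto. }
  destruct (functional_choice _ pick) as [g Hg].
  destruct (lt_regular kappa g) as [c Hc].
  exists c. intro t. exists (g (f t)). auto.
Qed.

Lemma acc_unbounded (E : L -> Prop) :
  (forall b, exists g, E g /\ le b g) -> forall b, exists g, acc E g /\ lt b g.
Proof.
  intros E_unbounded b.
  assert (E_unbounded_lt : forall b, exists g, E g /\ lt b g).
  { intro b'. destruct (exists_gt b') as [c b'c]. destruct (E_unbounded c) as [g [Eg cg]].
    exists g. split; [exact Eg|]. destruct cg as [cg|<-]; eauto. }
  destruct (exists_limit_point L_uncountable) as [a0 [[g0 g0a0] a0_limit]].
  destruct (cofinal_recursion E (fun x => x) b E_unbounded_lt) as [s Hs].
  destruct (lt_regular a0 (fun y => s (proj1_sig y))) as [c Hc].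
  (* the supremum of [s] along the limit [a0] *)
  destruct (wf_minimal (fun c => forall y, lt y a0 -> lt (s y) c) c) as [sup [sup_bound sup_least]].
  { intros y ya. exact (Hc (exist _ y ya)). }
  exists sup. split; [split|].
  - destruct (E_unbounded sup) as [e [Ee sup_e]]. eauto.
  - intros g g_sup.
    assert (exists y, lt y a0 /\ ~ lt (s y) g) as [y [ya not_below]].
    { apply NNPP; intro N. apply (sup_least g); auto.
      intros y ya. apply NNPP; intro N'. apply N; eauto. }
    destruct (a0_limit y ya) as [y' [yy' y'a0]].
    destruct (Hs y') as [E_sy' [_ s_incr]].
    exists (s y'). repeat split; auto.
    specialize (s_incr y yy').
    destruct (lt_total (s y) g) as [h|[<-|h]]; [contradiction|exact s_incr|eauto].
  - destruct (Hs g0) as [_ [b_s _]]. eauto.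
Qed.

Lemma acc_unbounded2 (E : L -> Prop) :
  (forall b, exists g, E g /\ le b g) -> forall x y, exists g, acc E g /\ lt x g /\ lt y g.
Proof.
  intros E_unbounded x y. destruct (exists_le_both x y) as [m [xm ym]].
  destruct (acc_unbounded E E_unbounded m) as [g [Ag mg]].
  exists g. split; [|split]; eauto using le_lt_trans.
Qed.

Section Threads.
Variables (kappa : L) (C : L -> (L -> Prop) -> Prop) (E : L -> Prop).
Hypothesis C_club : forall alpha X, C alpha X -> club_in L lt alpha X.
Hypothesis C_small : forall alpha, card_lt {X | C alpha X} {b : L | lt b kappa}.
Hypothesis C_coherent : forall beta X, C beta X ->
  forall alpha, acc X alpha -> C alpha (restrict X alpha).
Hypothesis E_unbounded : forall b, exists g, E g /\ le b g.
Hypothesis E_weak_thread : forall alpha, acc E alpha ->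
  exists X, C alpha X /\ forall x, restrict E alpha x -> X x.

Definition covering (a : L) (X : L -> Prop) : Prop :=
  C a X /\ forall x, restrict E a x -> X x.

Definition persistent (a : L) (X : L -> Prop) : Prop :=
  covering a X /\ forall b, acc E b -> lt a b -> exists Y, covering b Y /\ restrict Y a = X.

Definition splits_at (a b : L) (X : L -> Prop) : Prop :=
  exists Y1 Y2, persistent b Y1 /\ persistent b Y2 /\ Y1 <> Y2 /\
    restrict Y1 a = X /\ restrict Y2 a = X.

Lemma C_bounded a (R : (L -> Prop) -> L -> Prop) :
  (forall X, C a X -> exists g, R X g) ->
  exists c, forall X, C a X -> exists g, R X g /\ lt g c.
Proof.
  intro R_total. destruct (C_small a) as [small _].
  destruct (bounded_on_small _ kappa (fun X g => R (proj1_sig X) g) small) as [c Hc].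
  - intros [X CX]. exact (R_total X CX).
  - exists c. intros X CX. exact (Hc (exist _ X CX)).
Qed.

Lemma covering_restrict a b X : acc E a -> lt a b -> covering b X -> covering a (restrict X a).
Proof.
  intros Aa ab [CX EX]. destruct (C_club b X CX) as [X_below [X_unbounded _]]. split.
  - apply (C_coherent b X CX). apply acc_mono_below with E b; auto.
    intros x Ex xb. apply EX. split; auto.
  - intros x [Ex xa]. split; auto. apply EX. split; eauto.
Qed.

Lemma persistent_in a (S : (L -> Prop) -> Prop) :
  (forall X, S X -> covering a X) ->
  (forall b, acc E b -> lt a b -> exists Y, covering b Y /\ S (restrict Y a)) ->
  exists X, S X /\ persistent a X.
Proof.
  intros S_covering S_extends. apply NNPP; intro none.
  assert (obstruction : forall X, C a X -> exists g, S X ->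
            acc E g /\ lt a g /\ forall Y, covering g Y -> restrict Y a <> X).
  { intros X _. destruct (classic (S X)) as [SX|notS]; [|exists a; tauto].
    apply NNPP; intro N. apply none. exists X. split; [exact SX|split; [auto|]].
    intros b Ab ab. apply NNPP; intro N'. apply N. exists b. intros _.
    split; [exact Ab|split; [exact ab|]]. intros Y CY e. apply N'. eauto. }
  destruct (C_bounded a _ obstruction) as [c Hc].
  destruct (acc_unbounded2 E E_unbounded c a) as [b [Ab [cb ab]]].
  destruct (S_extends b Ab ab) as [Y [CY SY]].
  destruct (Hc _ (proj1 (S_covering _ SY))) as [g [Hg gc]].
  destruct (Hg SY) as [Ag [ag no_ext]].
  apply (no_ext (restrict Y g)).
  - apply covering_restrict with b; eauto.
  - apply restrict_restrict; auto.
Qed.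

Lemma persistent_exists a : acc E a -> exists X, persistent a X.
Proof.
  intro Aa. destruct (persistent_in a (covering a)) as [X [_ PX]]; eauto.
  intros b Ab ab. destruct (E_weak_thread b Ab) as [Y CY].
  exists Y. split; [exact CY|]. apply covering_restrict with b; auto.
Qed.

Lemma persistent_restrict a b Y : acc E a -> lt a b -> persistent b Y ->
  persistent a (restrict Y a).
Proof.
  intros Aa ab [CY Y_ext]. split; [apply covering_restrict with b; auto|].
  intros g Ag ag. destruct (lt_total g b) as [gb|[<-|bg]].
  - exists (restrict Y g). split; [apply covering_restrict with b; auto|].
    apply restrict_restrict; auto.
  - eauto.
  - destruct (Y_ext g Ag bg) as [Y' [CY' e]]. exists Y'. split; [exact CY'|].
    rewrite <- e. symmetry. apply restrict_restrict; auto.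
Qed.

Lemma persistent_extend a b X : acc E b -> lt a b -> persistent a X ->
  exists Y, persistent b Y /\ restrict Y a = X.
Proof.
  intros Ab ab [CX X_ext].
  destruct (persistent_in b (fun Y => covering b Y /\ restrict Y a = X))
    as [Y [[_ e] PY]]; [tauto| |eauto].
  intros g Ag bg. destruct (X_ext g Ag (lt_trans _ _ _ ab bg)) as [Y' [CY' e]].
  exists Y'. split; [exact CY'|split].
  - apply covering_restrict with g; auto.
  - rewrite restrict_restrict; auto.
Qed.

Lemma splits_at_later a g b X : lt a g -> lt g b -> acc E b -> splits_at a g X -> splits_at a b X.
Proof.
  intros ag gb Ab [Y1 [Y2 [PY1 [PY2 [Y12 [e1 e2]]]]]].
  destruct (persistent_extend g b Y1 Ab gb PY1) as [Z1 [PZ1 f1]].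
  destruct (persistent_extend g b Y2 Ab gb PY2) as [Z2 [PZ2 f2]].
  exists Z1, Z2. split; [exact PZ1|split; [exact PZ2|split; [|split]]].
  - intro e. apply Y12. congruence.
  - rewrite <- (restrict_restrict Z1 a g ag). congruence.
  - rewrite <- (restrict_restrict Z2 a g ag). congruence.
Qed.

Section Branch.
Variables (a : L) (X : L -> Prop).
Hypothesis X_persistent : persistent a X.
Hypothesis extension_unique : forall b Y1 Y2, acc E b -> lt a b ->
  persistent b Y1 -> persistent b Y2 -> restrict Y1 a = X -> restrict Y2 a = X -> Y1 = Y2.

Definition branch (x : L) : Prop :=
  exists b Y, acc E b /\ lt a b /\ persistent b Y /\ restrict Y a = X /\ Y x.

Lemma restrict_branch b Y : acc E b -> lt a b -> persistent b Y -> restrict Y a = X ->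
  restrict branch b = Y.
Proof.
  intros Ab ab PY eY. apply pred_ext. intro x. split.
  - intros [[b' [Y' [Ab' [ab' [PY' [eY' Y'x]]]]]] xb].
    destruct (lt_total b' b) as [b'b|[<-|bb']].
    + replace Y' with (restrict Y b') in Y'x by
        (apply extension_unique with b'; auto;
         [apply persistent_restrict with b; auto|rewrite restrict_restrict; auto]).
      apply Y'x.
    + replace Y with Y' by (apply extension_unique with b'; auto). exact Y'x.
    + replace Y with (restrict Y' b) by
        (apply extension_unique with b; auto;
         [apply persistent_restrict with b'; auto|rewrite restrict_restrict; auto]).
      split; auto.
  - intro Yx. split.
    + exists b, Y. auto.
    + destruct PY as [[CY _] _]. exact (proj1 (C_club b Y CY) x Yx).
Qed.

Lemma branch_through g : exists b Y, acc E b /\ lt g b /\ lt a b /\ persistent b Y /\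
  restrict branch b = Y.
Proof.
  destruct (acc_unbounded2 E E_unbounded g a) as [b [Ab [gb ab]]].
  destruct (persistent_extend a b X Ab ab X_persistent) as [Y [PY eY]].
  exists b, Y. split; [exact Ab|split; [exact gb|split; [exact ab|split; [exact PY|]]]].
  apply restrict_branch; auto.
Qed.

Lemma branch_thread : thread C branch.
Proof.
  split; [split|].
  - intro b0. destruct (E_unbounded b0) as [e [Ee b0e]].
    destruct (branch_through e) as [b [Y [Ab [eb [ab [[[_ EY] _] <-]]]]]].
    exists e. split; [|exact b0e]. apply EY. split; auto.
  - intros g _ acc_g [x [Dx xg]].
    destruct (branch_through g) as [b [Y [Ab [gb [ab [[[CY _] _] <-]]]]]].
    destruct (C_club b _ CY) as [_ [Y_unbounded Y_closed]].
    apply Y_closed; auto.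
    + apply acc_mono_below with branch b; auto. intros y Dy yb. split; auto.
    + exists x. repeat split; eauto.
  - intros g acc_g. destruct acc_g as [[x [Dx gx]] g_dense].
    destruct (branch_through x) as [b [Y [Ab [xb [ab [[[CY _] _] <-]]]]]].
    assert (gb : lt g b) by (eapply le_lt_trans; eauto).
    rewrite <- (restrict_restrict branch g b gb).
    apply (C_coherent b _ CY).
    apply acc_mono_below with branch b; auto.
    + intros y Dy yb. split; auto.
    + exists x. repeat split; auto.
    + split; [eauto|exact g_dense].
Qed.

End Branch.

Lemma persistent_splits (no_thread : ~ exists D, thread C D) a X : persistent a X ->
  exists b, acc E b /\ lt a b /\ splits_at a b X.
Proof.
  intro PX. apply NNPP; intro no_split. apply no_thread.
  exists (branch a X). apply branch_thread; auto.
  intros b Y1 Y2 Ab ab PY1 PY2 e1 e2. apply NNPP; intro Y12. apply no_split.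
  exists b. split; [exact Ab|split; [exact ab|]]. exists Y1, Y2. auto.
Qed.

Lemma uniform_split (no_thread : ~ exists D, thread C D) a :
  exists b, acc E b /\ lt a b /\ forall X, persistent a X -> splits_at a b X.
Proof.
  destruct (C_bounded a (fun X g => persistent a X -> lt a g /\ splits_at a g X)) as [c Hc].
  { intros X _. destruct (classic (persistent a X)) as [PX|NP]; [|exists a; tauto].
    destruct (persistent_splits no_thread a X PX) as [g [_ Hg]]. exists g; auto. }
  destruct (acc_unbounded2 E E_unbounded c a) as [b [Ab [cb ab]]].
  exists b. split; [exact Ab|split; [exact ab|]].
  intros X PX. destruct (Hc X (proj1 (proj1 PX))) as [g [Hg gc]].
  destruct (Hg PX) as [ag split_g]. apply splits_at_later with g; eauto.
Qed.

Lemma diverging_branch delta z a b : acc E delta -> persistent delta z ->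
  acc E a -> lt a b -> lt b delta -> (forall X, persistent a X -> splits_at a b X) ->
  exists W, C delta W /\ restrict W a = restrict z a /\ restrict W b <> restrict z b.
Proof.
  intros Ad Pz Aa ab bd split_b.
  destruct (split_b (restrict z a)) as [Y1 [Y2 [PY1 [PY2 [Y12 [e1 e2]]]]]].
  { apply persistent_restrict with delta; eauto. }
  assert (exists Y, persistent b Y /\ restrict Y a = restrict z a /\ Y <> restrict z b)
    as [Y [PY [eY Yz]]].
  { destruct (classic (Y1 = restrict z b)) as [<-|Y1z]; [exists Y2|exists Y1]; auto. }
  destruct (persistent_extend b delta Y Ad bd PY) as [W [[[CW _] _] eW]].
  exists W. split; [exact CW|split].
  - rewrite <- (restrict_restrict W a b ab), eW. exact eY.
  - congruence.
Qed.

Lemma thread_exists : exists D, thread C D.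
Proof.
  apply NNPP; intro no_thread.
  destruct (functional_choice _ (uniform_split no_thread)) as [phi Hphi].
  destruct (cofinal_recursion (acc E) phi kappa (acc_unbounded E E_unbounded)) as [s Hs].
  pose (delta := s kappa).
  destruct (Hs kappa) as [Ad [_ below_delta]].
  destruct (persistent_exists delta Ad) as [z Pz].
  (* Below [delta], branch [x] follows [z] up to [s x] and leaves it before [phi (s x)]. *)
  destruct (functional_choice (fun x W => lt x kappa -> C delta W /\
      restrict W (s x) = restrict z (s x) /\ restrict W (phi (s x)) <> restrict z (phi (s x))))
    as [W HW].
  { intro x. destruct (classic (lt x kappa)) as [xk|not_xk]; [|exists z; tauto].
    destruct (Hs x) as [Ax _]. destruct (Hphi (s x)) as [_ [sx_phi split_phi]].
    destruct (diverging_branch delta z (s x) (phi (s x)) Ad Pz Ax sx_phi (below_delta x xk)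
      split_phi) as [Wx HWx].
    exists Wx. auto. }
  destruct (C_small delta) as [_ no_injection]. apply no_injection.
  exists (fun xi => exist _ (W (proj1_sig xi)) (proj1 (HW _ (proj2_sig xi)))).
  intros [x xk] [y yk] e. apply subset_eq_compat.
  apply (separated_injective (fun x => lt x kappa) W z s (fun x => phi (s x))); auto.
  - intros x' y' _ _ x'y'. apply (Hs y'); auto.
  - apply HW.
  - apply HW.
  - exact (f_equal (@proj1_sig _ _) e).
Qed.

End Threads.
End Regular.
End WellOrder.

Theorem lemma2p3 (L : Type) (lt : L -> L -> Prop) (kappa : L)
  (C : L -> (L -> Prop) -> Prop) :
  @regular_uncountable_cardinal L lt ->
  @coherent_seq L lt C kappa ->
  (exists E, @weak_thread L lt C E) ->
  exists D, @thread L lt C D.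
Proof.
  intros [[_ [trans [total wf]]] [_ [regular uncountable]]]
    [_ [C_club [_ [C_small C_coherent]]]] [E [[E_unbounded _] E_weak_thread]].
  eapply thread_exists; eauto.
Qed.
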